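(* Let $\mathcal{X},\mathcal{Y}$ be finite, $P_X$ a distribution on $\mathcal{X}$, $P_{Y|X}$ a channel, $P_{XY}=P_XP_{Y|X}$ with $\mathcal{Y}$-marginal $P_Y$, and let $R>I(P_X,P_{Y|X})$. Then \[ \min_{Q_{XY}}\Big\{D(Q_{XY}\|P_{XY})+\tfrac12\big[R-D(Q_{XY}\|P_XQ_Y)\big]_+\Big\}=\max_{\lambda\in[1,2]}\Big\{\frac{\lambda-1}{\lambda}\big(R-I^{\mathsf{s}}_\lambda(P_X,P_{Y|X})\big)\Big\}, \] where the minimum is over all joint distributions $Q_{XY}$ on $\mathcal{X}\times\mathcal{Y}$, $Q_Y$ is the $\mathcal{Y}$-marginal of $Q_{XY}$, and $[f]_+=\max\{0,f\}$.
   Context: $D$ is relative entropy and $I(P_X,P_{Y|X})=D(P_{XY}\|P_XP_Y)$. Sibson's $\alpha$-mutual information is $I^{\mathsf{s}}_\lambda(P_X,P_{Y|X})=\frac{\lambda}{\lambda-1}\log\sum_{y}\big(\sum_xP_X(x)P_{Y|X}^\lambda(y|x)\big)^{1/\lambda}$ for $\lambda\neq1$, with $I^{\mathsf{s}}_1=I(P_X,P_{Y|X})$. Logarithms and exponentials use a common arbitrary base. *)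

From mathcomp Require Import all_boot all_order all_algebra.
From mathcomp Require Import all_classical all_reals all_analysis.
Set Implicit Arguments. Unset Strict Implicit. Unset Printing Implicit Defensive.
Import Order.TTheory GRing.Theory Num.Theory.
Local Open Scope ring_scope.

Section InfoDefs.
Variable R : realType.

Definition is_dist (T : finType) (p : T -> R) : Prop :=
  (forall t, 0 <= p t) /\ \sum_(t : T) p t = 1.

Definition logb (b x : R) : R := ln x / ln b.

Definition relent (b : R) (T : finType) (q p : T -> R) : \bar R :=
  if [exists t, (q t != 0) && (p t == 0)] then +oo%E
  else (\sum_(t : T) (if q t == 0 then 0 else q t * logb b (q t / p t)))%:E.

Definition joint (X Y : finType) (PX : X -> R) (W : X -> Y -> R) : X * Y -> R :=
  fun xy => PX xy.1 * W xy.1 xy.2.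

Definition margY (X Y : finType) (Q : X * Y -> R) : Y -> R :=
  fun y => \sum_(x : X) Q (x, y).

Definition prodD (X Y : finType) (PX : X -> R) (QY : Y -> R) : X * Y -> R :=
  fun xy => PX xy.1 * QY xy.2.

Definition MI (b : R) (X Y : finType) (PX : X -> R) (W : X -> Y -> R) : \bar R :=
  relent b (joint PX W) (prodD PX (margY (joint PX W))).

Definition sibsonMI (b : R) (X Y : finType) (PX : X -> R) (W : X -> Y -> R)
    (l : R) : \bar R :=
  if l == 1 then MI b PX W
  else ((l / (l - 1)) *
        logb b (\sum_(y : Y) (\sum_(x : X) PX x * (W x y `^ l)) `^ (l^-1)))%:E.

Definition objective (b : R) (X Y : finType) (PX : X -> R) (W : X -> Y -> R)
    (Rt : R) (Q : X * Y -> R) : \bar R :=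
  (relent b Q (joint PX W) +
   (2^-1)%:E * maxe 0%E (Rt%:E - relent b Q (prodD PX (margY Q))))%E.

Definition dual_fun (b : R) (X Y : finType) (PX : X -> R) (W : X -> Y -> R)
    (Rt : R) (l : R) : \bar R :=
  (((l - 1) / l)%:E * (Rt%:E - sibsonMI b PX W l))%E.

End InfoDefs.

From mathcomp Require Import all_boot all_order all_algebra.
From mathcomp Require Import all_classical all_reals all_analysis.
From mathcomp Require Import ring lra.
Import Order.TTheory GRing.Theory Num.Theory.
Import numFieldNormedType.Exports.
Set Implicit Arguments. Unset Strict Implicit. Unset Printing Implicit Defensive.
Local Open Scope ring_scope.

(* Write A_l(y) = sum_x P_X(x) W(y|x)^l ([mixpow]) and
   Z_l = sum_y A_l(y)^(1/l) ([sibson_norm]), so that (l - 1)/l I^s_l = log Z_l.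
   For l > 0 and Q << P_XY, the log-sum inequality, applied first over x for
   each y and then over y, gives
     (1 - 1/l) D(Q || P_X Q_Y) - D(Q || P_XY) <= ln Z_l,
   and for 1 <= l <= 2 the bound (1 - 1/l) d <= [d]_+ / 2 turns this into
   dual_fun(l) <= objective(Q).  Both log-sum steps are equalities at the tilted distribution
   Q_l(x, y) ~ P_X(x) W(y|x)^l A_l(y)^(1/l - 1) ([tilted]), so
   objective(Q_l) = dual_fun(l) as soon as the bracket [R - D(Q_l || P_X Q_lY)]_+
   vanishes, or l = 2 and the bracket is nonnegative.  The map
   l |-> D(Q_l || P_X Q_lY) is continuous and equals I(P_X, P_{Y|X}) < R at
   l = 1; hence either l = 2 works or the intermediate value theorem yields an
   l in [1, 2] of the first kind. *)

Section General.
Variable R : realType.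

Lemma ln_le_subr1 (t : R) : 0 < t -> ln t <= t - 1.
Proof.
move=> t0; have := @le_ln1Dx R (t - 1).
by rewrite (addrC 1) subrK; apply; lra.
Qed.

Lemma ler_sum_term (T : finType) (F : T -> R) j :
  (forall i, 0 <= F i) -> F j <= \sum_i F i.
Proof. by move=> F0; rewrite (bigD1 j) //= lerDl sumr_ge0. Qed.

Lemma sumr_pair (X Y : finType) (F : X * Y -> R) :
  \sum_t F t = \sum_y \sum_x F (x, y).
Proof. by rewrite exchange_big pair_bigA /=; apply: eq_bigr => -[x y]. Qed.

Definition xlog (q a : R) := if q == 0 then 0 else q * ln (a / q).

Lemma log_sum_ineq (T : finType) (q a : T -> R) :
  (forall t, 0 <= q t) -> (forall t, 0 <= a t) ->
  (forall t, q t != 0 -> 0 < a t) ->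
  \sum_t xlog (q t) (a t) <= xlog (\sum_t q t) (\sum_t a t).
Proof.
move=> q0 a0 qa; set s := \sum_t q t; set A := \sum_t a t.
have [s0|sn0] := eqVneq s 0.
  have qt0 t : q t = 0 by apply: (psumr_eq0P (fun i _ => q0 i) s0).
  by rewrite s0 /xlog eqxx big1 // => t _; rewrite qt0 eqxx.
have s_gt0 : 0 < s by rewrite lt0r sn0 sumr_ge0.
have [t /andP[_ /lt0r_neq0 qt]] := psumr_neq0P (fun i _ => q0 i) (elimN eqP sn0).
have A_gt0 : 0 < A by apply: lt_le_trans (qa t qt) (ler_sum_term _ a0).
set c := A / s; have c_gt0 : 0 < c by rewrite divr_gt0.
rewrite {2}/xlog (negbTE sn0) -/c mulr_suml -subr_le0 -sumrB.
(* [q ln (a / q) - q ln c = q ln (a / (q c)) <= a / c - q], and the right-hand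
   sides sum to [0]. *)
apply: (@le_trans _ _ (\sum_i (a i / c - q i))).
  apply: ler_sum => i _; rewrite /xlog; case: eqP => [->|/eqP qi].
    by rewrite mul0r subrr subr0 divr_ge0 // ltW.
  have qi_gt0 : 0 < q i by rewrite lt0r qi q0.
  have ai_gt0 := qa i qi.
  rewrite -mulrBr -ln_div ?posrE ?divr_gt0 //.
  have -> : a i / c - q i = q i * (a i / q i / c - 1) by field; rewrite !gt_eqF.
  by rewrite ler_wpM2l ?ln_le_subr1 ?divr_gt0 // ltW.
rewrite sumrB -mulr_suml -/A -/s /c invf_div mulrCA divff ?gt_eqF //.
by rewrite mulr1 subrr.
Qed.

Lemma log_sum_ineq_margY (X Y : finType) (Q a : X * Y -> R) :
  (forall t, 0 <= Q t) -> (forall t, 0 <= a t) ->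
  (forall t, Q t != 0 -> 0 < a t) ->
  \sum_t xlog (Q t) (a t) <= \sum_y xlog (margY Q y) (margY a y).
Proof.
move=> Q0 a0 Qa; rewrite sumr_pair; apply: ler_sum => y _.
by apply: log_sum_ineq => [x|x|x /Qa].
Qed.

Lemma le_half_max0 (u d : R) :
  2^-1 <= u <= 1 -> (1 - u) * d <= 2^-1 * Num.max 0 d.
Proof.
case/andP => u2 u1.
have m0 : 0 <= Num.max 0 d by rewrite le_max lexx.
have md : d <= Num.max 0 d by rewrite le_max lexx orbT.
nra.
Qed.

Lemma sum_continuous (I : finType) (f : I -> R -> R) (x : R) :
  (forall i, {for x, continuous (f i)}) ->
  {for x, continuous (fun t => \sum_i f i t)}.
Proof. by move=> fc; apply: cvg_big => // [|i _]; [exact: add_continuous|exact: fc]. Qed.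

(* Unlike [powR], [powRz] sends [0] to [0] also at exponent [0]; thus
   [e |-> powRz a e] is continuous for every [a]. *)
Definition powRz (a e : R) := if a == 0 then 0 else expR (e * ln a).

Lemma powRzE a e : e != 0 -> a `^ e = powRz a e.
Proof. by move=> e0; rewrite /powR /powRz; case: eqP => //; rewrite (negbTE e0). Qed.

Lemma powRz_ge0 a e : 0 <= powRz a e.
Proof. by rewrite /powRz; case: eqP => // _; exact/ltW/expR_gt0. Qed.

Lemma powRz_gt0 a e : 0 < a -> 0 < powRz a e.
Proof. by move=> a0; rewrite /powRz gt_eqF // expR_gt0. Qed.

Lemma powRz0 e : powRz 0 e = 0.
Proof. by rewrite /powRz eqxx. Qed.

Lemma powRzr1 a : 0 <= a -> powRz a 1 = a.
Proof.
rewrite /powRz; case: eqP => [->//|/eqP an0 a0].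
by rewrite mul1r lnK // posrE lt0r an0.
Qed.

Lemma powRzr0 a : a != 0 -> powRz a 0 = 1.
Proof. by rewrite /powRz => /negbTE ->; rewrite mul0r expR0. Qed.

Lemma powRzD a e f : powRz a (e + f) = powRz a e * powRz a f.
Proof. by rewrite /powRz; case: eqP => _; rewrite ?mul0r // mulrDl expRD. Qed.

Lemma ln_powRz a e : 0 < a -> ln (powRz a e) = e * ln a.
Proof. by move=> a0; rewrite /powRz gt_eqF // expRK. Qed.

Lemma mul_powRzB1 a e : 0 <= a -> a * powRz a (e - 1) = powRz a e.
Proof. by move=> a0; rewrite -{1}(powRzr1 a0) -powRzD addrC subrK. Qed.

Lemma continuous_powRz a (e : R -> R) (x : R) : {for x, continuous e} ->
  {for x, continuous (fun t => powRz a (e t))}.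
Proof.
move=> ec; rewrite /powRz; case: eqP => _; first exact: cst_continuous.
apply: continuous_comp _ (@continuous_expR R _).
by apply: continuousM => //; exact: cst_continuous.
Qed.

Definition abs_cont (T : finType) (q p : T -> R) := forall t, q t != 0 -> p t != 0.

Definition kl (T : finType) (q p : T -> R) :=
  \sum_t (if q t == 0 then 0 else q t * ln (q t / p t)).

Lemma relent_kl (b : R) (T : finType) (q p : T -> R) :
  abs_cont q p -> relent b q p = (kl q p / ln b)%:E.
Proof.
move=> qp; rewrite /relent; case: existsP => [[t /andP[qt /eqP pt]]|_].
  by move: (qp t qt); rewrite pt eqxx.
congr EFin; rewrite /kl /logb mulr_suml; apply: eq_bigr => t _.
by case: ifP => _; rewrite ?mul0r // mulrA.
Qed.

Lemma relent_oo (b : R) (T : finType) (q p : T -> R) :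
  ~ abs_cont q p -> relent b q p = +oo%E.
Proof.
move=> qNp; rewrite /relent; case: existsP => // -[]; apply: contra_notP qNp.
by move=> /forallNP qp t qt; apply: contraPneq (qp t) => pt; rewrite qt pt eqxx.
Qed.

End General.

Section Channel.
Variable R : realType.
Variables (X Y : finType) (PX : X -> R) (W : X -> Y -> R).
Hypothesis PX0 : forall x, 0 <= PX x.
Hypothesis PX1 : \sum_x PX x = 1.
Hypothesis W0 : forall x y, 0 <= W x y.
Hypothesis W1 : forall x, \sum_y W x y = 1.

Lemma joint_sum1 : \sum_t joint PX W t = 1.
Proof.
rewrite sumr_pair exchange_big -PX1; apply: eq_bigr => x _.
by rewrite /joint /= -mulr_sumr W1 mulr1.
Qed.

Definition mixpow l y := \sum_x PX x * powRz (W x y) l.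

Definition reachable y := [exists x, (PX x != 0) && (W x y != 0)].

Lemma mixpow_ge0 l y : 0 <= mixpow l y.
Proof. by apply: sumr_ge0 => x _; rewrite mulr_ge0 ?powRz_ge0. Qed.

Lemma mixpow_gt0 l y : reachable y -> 0 < mixpow l y.
Proof.
case/existsP => x /andP[px wx].
apply: (@lt_le_trans _ _ (PX x * powRz (W x y) l)).
  by rewrite mulr_gt0 ?powRz_gt0 // lt0r ?px ?wx ?PX0 ?W0.
by apply: (ler_sum_term (F := fun x => PX x * powRz (W x y) l)) => i;
  rewrite mulr_ge0 ?powRz_ge0.
Qed.

Lemma mixpow_eq0 l y : ~~ reachable y -> mixpow l y = 0.
Proof.
move=> yN; apply: big1 => x _; have [->|px] := eqVneq (PX x) 0; first by rewrite mul0r.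
suff -> : W x y = 0 by rewrite powRz0 mulr0.
by apply/eqP; apply: contraNT yN => wx; apply/existsP; exists x; rewrite px wx.
Qed.

Lemma exists_reachable : exists y, reachable y.
Proof.
have sum1_neq0 (T : finType) (p : T -> R) : (forall t, 0 <= p t) ->
    \sum_t p t = 1 -> exists t, p t != 0.
  move=> p0 p1; have : \sum_t p t <> 0 by rewrite p1; exact/eqP/oner_neq0.
  by case/(psumr_neq0P (fun t _ => p0 t)) => t /andP[_ /lt0r_neq0]; exists t.
have [x px] := sum1_neq0 _ _ PX0 PX1; have [y wy] := sum1_neq0 _ _ (W0 x) (W1 x).
by exists y; apply/existsP; exists x; rewrite px wy.
Qed.

Definition sibson_norm l := \sum_y powRz (mixpow l y) l^-1.

Lemma sibson_norm_gt0 l : 0 < sibson_norm l.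
Proof.
have [y /(mixpow_gt0 l) Ay] := exists_reachable.
apply: lt_le_trans (powRz_gt0 l^-1 Ay) _.
by apply: (ler_sum_term (F := fun y => powRz (mixpow l y) l^-1)) => i; exact: powRz_ge0.
Qed.

Lemma sibson_norm1 : sibson_norm 1 = 1.
Proof.
rewrite /sibson_norm invr1 -[RHS]joint_sum1 sumr_pair; apply: eq_bigr => y _.
by rewrite powRzr1 ?mixpow_ge0 //; apply: eq_bigr => x _; rewrite powRzr1.
Qed.

Definition tilted l (t : X * Y) :=
  PX t.1 * powRz (W t.1 t.2) l * powRz (mixpow l t.2) (l^-1 - 1) / sibson_norm l.

Lemma margY_tilted l :
  margY (tilted l) = fun y => powRz (mixpow l y) l^-1 / sibson_norm l.
Proof.
apply: funext => y; rewrite /margY /tilted /= -!mulr_suml.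
by rewrite [\sum_x _](_ : _ = mixpow l y) // mul_powRzB1 // mixpow_ge0.
Qed.

Lemma tilted_dist l : is_dist (tilted l).
Proof.
split=> [t|]; first by rewrite !mulr_ge0 ?powRz_ge0 // invr_ge0 ltW // sibson_norm_gt0.
rewrite sumr_pair [\sum_y _](_ : _ = \sum_y margY (tilted l) y) // margY_tilted.
by rewrite -mulr_suml divff // gt_eqF // sibson_norm_gt0.
Qed.

Lemma tilted_supp l t : tilted l t != 0 ->
  [/\ 0 < PX t.1, 0 < W t.1 t.2 & 0 < mixpow l t.2].
Proof.
case: t => x y /=; rewrite /tilted /= => Qn0.
have px : PX x != 0 by apply: contraNneq Qn0 => ->; rewrite !mul0r.
have wx : W x y != 0 by apply: contraNneq Qn0 => ->; rewrite powRz0 mulr0 !mul0r.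
split; [by rewrite lt0r px PX0 | by rewrite lt0r wx W0|].
by apply: mixpow_gt0; apply/existsP; exists x; rewrite px wx.
Qed.

Lemma tilted1 : tilted 1 = joint PX W.
Proof.
apply: funext => -[x y].
rewrite /tilted /joint /= sibson_norm1 invr1 subrr mulr1 powRzr1 //.
have [Ay0|An0] := eqVneq (mixpow 1 y) 0; last by rewrite powRzr0 // mulr1.
have Psum0 : \sum_i PX i * W i y = 0.
  by rewrite -[RHS]Ay0; apply: eq_bigr => i _; rewrite powRzr1.
rewrite Ay0 powRz0 mulr0; apply/esym.
by apply: (psumr_eq0P _ Psum0) => // i _; exact: mulr_ge0.
Qed.

Definition tilted_info l :=
  \sum_t tilted l t * (l * ln (W t.1 t.2) - ln (mixpow l t.2)).

Lemma kl_tilted_prod l : kl (tilted l) (prodD PX (margY (tilted l))) = tilted_info l.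
Proof.
rewrite /kl /tilted_info margY_tilted; apply: eq_bigr => -[x y] _ /=.
case: eqP => [->|/eqP /tilted_supp[/= px wx Ay]]; first by rewrite mul0r.
have Z0 := sibson_norm_gt0 l.
congr (_ * _); rewrite /prodD /tilted /=.
rewrite -(mul_powRzB1 l^-1 (ltW Ay)) (_ : _ / _ = powRz (W x y) l / mixpow l y).
  by rewrite ln_div ?posrE ?powRz_gt0 // ln_powRz.
by field; rewrite !gt_eqF ?powRz_gt0.
Qed.

Lemma kl_tilted_joint l : l != 0 ->
  kl (tilted l) (joint PX W) = (1 - l^-1) * tilted_info l - ln (sibson_norm l).
Proof.
move=> l0; have Z0 := sibson_norm_gt0 l.
have -> : ln (sibson_norm l) = \sum_t tilted l t * ln (sibson_norm l).
  by rewrite -mulr_suml (tilted_dist l).2 mul1r.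
rewrite /kl /tilted_info mulr_sumr -sumrB; apply: eq_bigr => -[x y] _ /=.
case: eqP => [->|/eqP /tilted_supp[/= px wx Ay]]; first by rewrite !mul0r mulr0 subrr.
rewrite (_ : _ / _ =
    powRz (W x y) l * powRz (mixpow l y) (l^-1 - 1) / (W x y * sibson_norm l)).
  rewrite ln_div ?posrE ?mulr_gt0 ?powRz_gt0 // !lnM ?posrE ?powRz_gt0 // !ln_powRz //.
  by field.
by rewrite /tilted /joint /=; field; rewrite !gt_eqF.
Qed.

Lemma abs_cont_joint_supp (Q : X * Y -> R) x y :
  is_dist Q -> abs_cont Q (joint PX W) -> Q (x, y) != 0 ->
  [/\ 0 < PX x, 0 < W x y & 0 < margY Q y].
Proof.
move=> [Q0 _] QP Qn0; have := QP _ Qn0.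
rewrite /joint mulf_eq0 negb_or => /andP[/= px wx].
split; [by rewrite lt0r px PX0 | by rewrite lt0r wx W0 |].
apply: lt_le_trans (ler_sum_term (F := fun x => Q (x, y)) x (fun i => Q0 (i, y))).
by rewrite lt0r Qn0 Q0.
Qed.

Lemma margY_neq0_mixpow_gt0 (Q : X * Y -> R) l y :
  is_dist Q -> abs_cont Q (joint PX W) -> margY Q y != 0 -> 0 < mixpow l y.
Proof.
move=> QD QP /eqP /(psumr_neq0P (fun x _ => QD.1 (x, y)))[x /andP[_ /lt0r_neq0 Qn0]].
have [px wx _] := abs_cont_joint_supp QD QP Qn0.
by apply: mixpow_gt0; apply/existsP; exists x; rewrite !gt_eqF.
Qed.

Lemma kl_combinationE (Q : X * Y -> R) l :
  is_dist Q -> abs_cont Q (joint PX W) -> l != 0 ->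
  (1 - l^-1) * kl Q (prodD PX (margY Q)) - kl Q (joint PX W) =
  l^-1 * \sum_t xlog (Q t) (PX t.1 * powRz (W t.1 t.2) l)
    - (1 - l^-1) * \sum_y margY Q y * ln (margY Q y).
Proof.
move=> QD QP l0.
have -> : \sum_y margY Q y * ln (margY Q y) = \sum_t Q t * ln (margY Q t.2).
  by rewrite sumr_pair; apply: eq_bigr => y _; rewrite {1}/margY mulr_suml.
rewrite /kl /xlog !mulr_sumr -!sumrB; apply: eq_bigr => -[x y] _ /=.
case: eqP => [->|/eqP Qn0]; first by rewrite !(mul0r, mulr0, subrr).
have [px wx Qy] := abs_cont_joint_supp QD QP Qn0.
have Q_gt0 : 0 < Q (x, y) by rewrite lt0r Qn0 QD.1.
rewrite /prodD /joint /= !ln_div ?posrE ?mulr_gt0 ?powRz_gt0 //.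
by rewrite !lnM ?posrE ?powRz_gt0 // ln_powRz //; field.
Qed.

Lemma kl_variational_le (Q : X * Y -> R) l :
  is_dist Q -> abs_cont Q (joint PX W) -> 0 < l ->
  (1 - l^-1) * kl Q (prodD PX (margY Q)) - kl Q (joint PX W) <= ln (sibson_norm l).
Proof.
move=> QD QP l0; have [Q0 Q1] := QD.
have QY0 y : 0 <= margY Q y by apply: sumr_ge0 => x _.
have QY1 : \sum_y margY Q y = 1 by rewrite -Q1 sumr_pair.
have Ay y : margY Q y != 0 -> 0 < mixpow l y by exact: margY_neq0_mixpow_gt0.
rewrite kl_combinationE ?gt_eqF //.
apply: (@le_trans _ _ (l^-1 * \sum_y xlog (margY Q y) (mixpow l y)
                       - (1 - l^-1) * \sum_y margY Q y * ln (margY Q y))).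
  rewrite lerD2r ler_wpM2l ?invr_ge0 ?(ltW l0) //.
  apply: (log_sum_ineq_margY (a := fun t => PX t.1 * powRz (W t.1 t.2) l)) => //.
    by move=> t; rewrite mulr_ge0 ?powRz_ge0.
  move=> [x y] Qn0.
  by have [px wx _] := abs_cont_joint_supp QD QP Qn0; rewrite mulr_gt0 ?powRz_gt0.
suff -> : l^-1 * \sum_y xlog (margY Q y) (mixpow l y)
    - (1 - l^-1) * \sum_y margY Q y * ln (margY Q y)
    = \sum_y xlog (margY Q y) (powRz (mixpow l y) l^-1).
  have := log_sum_ineq QY0 (fun y => powRz_ge0 (mixpow l y) l^-1)
    (fun y qn => powRz_gt0 l^-1 (Ay y qn)).
  by rewrite QY1 /xlog oner_eq0 mul1r divr1.
rewrite !mulr_sumr -sumrB; apply: eq_bigr => y _; rewrite /xlog.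
case: eqP => [->|/eqP qn]; first by rewrite !(mul0r, mulr0, subrr).
have qy : 0 < margY Q y by rewrite lt0r qn QY0.
by rewrite !ln_div ?posrE ?powRz_gt0 ?Ay // ln_powRz ?Ay //; ring.
Qed.

Lemma continuous_mixpow y l0 : {for l0, continuous (fun l => mixpow l y)}.
Proof.
apply: sum_continuous => x; apply: continuousM; first exact: cst_continuous.
by apply: continuous_powRz; exact: cvg_id.
Qed.

Lemma continuous_powRz_mixpow y (e : R -> R) l0 : {for l0, continuous e} ->
  {for l0, continuous (fun l => powRz (mixpow l y) (e l))}.
Proof.
move=> ec; have [yR|yN] := boolP (reachable y).
  rewrite (_ : (fun l => _) = fun l => expR (e l * ln (mixpow l y))); last first.
    by apply: funext => l; rewrite /powRz gt_eqF // mixpow_gt0.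
  apply: continuous_comp _ (@continuous_expR R _); apply: continuousM => //.
  apply: continuous_comp (@continuous_mixpow y l0) _.
  by apply: continuous_ln; exact: mixpow_gt0.
rewrite (_ : (fun l => _) = fun => 0); first exact: cst_continuous.
by apply: funext => l; rewrite mixpow_eq0 // powRz0.
Qed.

Lemma continuous_ln_mixpow y l0 : {for l0, continuous (fun l => ln (mixpow l y))}.
Proof.
have [yR|yN] := boolP (reachable y).
  apply: continuous_comp (@continuous_mixpow y l0) _.
  by apply: continuous_ln; exact: mixpow_gt0.
rewrite (_ : (fun l => _) = fun => ln 0); first exact: cst_continuous.
by apply: funext => l; rewrite mixpow_eq0.
Qed.

Lemma continuous_sibson_norm l0 : l0 != 0 -> {for l0, continuous sibson_norm}.
Proof.
move=> l0n; apply: sum_continuous => y.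
by apply: continuous_powRz_mixpow; exact: inv_continuous.
Qed.

Lemma continuous_tilted t l0 : l0 != 0 -> {for l0, continuous (fun l => tilted l t)}.
Proof.
move=> l0n; apply: continuousM; last first.
  apply: continuousV; last exact: continuous_sibson_norm.
  by rewrite gt_eqF // sibson_norm_gt0.
apply: continuousM; last first.
  apply: continuous_powRz_mixpow; apply: continuousB; last exact: cst_continuous.
  exact: inv_continuous.
apply: continuousM; first exact: cst_continuous.
by apply: continuous_powRz; exact: cvg_id.
Qed.

Lemma continuous_tilted_info l0 : l0 != 0 -> {for l0, continuous tilted_info}.
Proof.
move=> l0n; apply: sum_continuous => t.
apply: continuousM; first exact: continuous_tilted.
apply: continuousB; last exact: continuous_ln_mixpow.
by apply: continuousM; [exact: cvg_id | exact: cst_continuous].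
Qed.

Lemma abs_cont_tilted_joint l : abs_cont (tilted l) (joint PX W).
Proof. by move=> t /tilted_supp[px wx _]; rewrite mulf_neq0 // gt_eqF. Qed.

Lemma abs_cont_tilted_prod l : abs_cont (tilted l) (prodD PX (margY (tilted l))).
Proof.
move=> t /tilted_supp[px _ Ay]; rewrite /prodD margY_tilted mulf_neq0 ?gt_eqF //.
by rewrite divr_gt0 ?powRz_gt0 ?sibson_norm_gt0.
Qed.

Section ObjectiveDual.
Variables (b Rt : R).
Hypothesis b1 : 1 < b.

Let lnb_gt0 : 0 < ln b := ln_gt0 b1.

Lemma MI_tilted : MI b PX W = (tilted_info 1 / ln b)%:E.
Proof.
by rewrite /MI -tilted1 (relent_kl b (@abs_cont_tilted_prod 1)) kl_tilted_prod.
Qed.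

Lemma dual_funE l : 1 <= l ->
  dual_fun b PX W Rt l = ((1 - l^-1) * Rt - ln (sibson_norm l) / ln b)%:E.
Proof.
move=> l1; have l0 : l != 0 by rewrite gt_eqF // (lt_le_trans ltr01 l1).
rewrite /dual_fun /sibsonMI; case: eqP => [->|/eqP ln1].
  by rewrite subrr mul0r mul0e invr1 subrr !mul0r sibson_norm1 ln1 !mul0r subrr.
rewrite (_ : \sum_y _ = sibson_norm l).
  have l10 : l - 1 != 0 by rewrite subr_eq0.
  by rewrite -EFinB -EFinM /logb; congr EFin; field; rewrite l0 l10 gt_eqF.
apply: eq_bigr => y _; rewrite powRzE ?invr_eq0 //; congr powRz.
by apply: eq_bigr => x _; rewrite powRzE.
Qed.

Lemma objectiveE (Q : X * Y -> R) : is_dist Q -> abs_cont Q (joint PX W) ->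
  objective b PX W Rt Q = (kl Q (joint PX W) / ln b +
    2^-1 * Num.max 0 (Rt - kl Q (prodD PX (margY Q)) / ln b))%:E.
Proof.
move=> QD QP; rewrite /objective (relent_kl b QP) (relent_kl b).
  by rewrite -EFinB -EFin_max -EFinM -EFinD.
move=> [x y] /(abs_cont_joint_supp QD QP)[px _ Qy].
by rewrite /prodD mulf_neq0 // gt_eqF.
Qed.

Lemma objective_oo (Q : X * Y -> R) : ~ abs_cont Q (joint PX W) ->
  objective b PX W Rt Q = +oo%E.
Proof.
move=> QnP; rewrite /objective (relent_oo b QnP) addye //.
set m := (_ * _)%E; have m0 : (0 <= m)%E.
  by apply: mule_ge0; [rewrite lee_fin invr_ge0 | rewrite le_max lexx].
by apply/negP => /eqP m_oo; move: m0; rewrite m_oo.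
Qed.

Lemma dual_le_objective (Q : X * Y -> R) l : is_dist Q -> 1 <= l <= 2 ->
  (dual_fun b PX W Rt l <= objective b PX W Rt Q)%E.
Proof.
move=> QD /andP[l1 l2]; have l0 : 0 < l := lt_le_trans ltr01 l1.
have [QP|QnP] := pselect (abs_cont Q (joint PX W)); last by rewrite objective_oo ?leey.
rewrite objectiveE // dual_funE // lee_fin.
have var := kl_variational_le QD QP l0.
set k1 := kl Q (joint PX W) in var *; set k2 := kl Q (prodD PX (margY Q)) in var *.
set u := l^-1 in var *.
have u_gt0 : 0 < u by rewrite invr_gt0.
have ul : u * l = 1 by rewrite mulVf // gt_eqF.
have u_bd : 2^-1 <= u <= 1 by apply/andP; split; nra.
have c_gt0 : 0 < (ln b)^-1 by rewrite invr_gt0.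
have := ler_wpM2r (ltW c_gt0) var; have := le_half_max0 (Rt - k2 / ln b) u_bd.
nra.
Qed.

Lemma objective_tiltedE l : 1 <= l ->
  objective b PX W Rt (tilted l) =
  (((1 - l^-1) * tilted_info l - ln (sibson_norm l)) / ln b
    + 2^-1 * Num.max 0 (Rt - tilted_info l / ln b))%:E.
Proof.
move=> l1; rewrite objectiveE; last 2 first.
- exact: tilted_dist.
- exact: abs_cont_tilted_joint.
by rewrite kl_tilted_joint ?kl_tilted_prod // gt_eqF // (lt_le_trans ltr01 l1).
Qed.

Lemma objective_tilted_eq_dual l : 1 <= l -> tilted_info l = Rt * ln b ->
  objective b PX W Rt (tilted l) = dual_fun b PX W Rt l.
Proof.
move=> l1 hl; rewrite objective_tiltedE // dual_funE // hl mulfK ?gt_eqF //.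
by rewrite subrr maxxx; congr EFin; field; rewrite !gt_eqF // (lt_le_trans ltr01 l1).
Qed.

Lemma objective_tilted2_eq_dual : tilted_info 2 <= Rt * ln b ->
  objective b PX W Rt (tilted 2) = dual_fun b PX W Rt 2.
Proof.
move=> h2; rewrite objective_tiltedE ?ler1n // dual_funE ?ler1n //.
rewrite (max_idPr _) ?subr_ge0 ?ler_pdivrMr //; congr EFin.
by field; rewrite gt_eqF.
Qed.

Lemma exists_tilted_info_eq v : tilted_info 1 <= v <= tilted_info 2 ->
  exists2 l, 1 <= l <= 2 & tilted_info l = v.
Proof.
move=> hv; have h12 : tilted_info 1 <= tilted_info 2 by case/andP: hv; exact: le_trans.
have le12 : (1 : R) <= 2 by rewrite ler1n.
have cont : {within `[1, 2], continuous tilted_info}%classic.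
  apply: continuous_subspace_itv => l; rewrite in_itv /= => /andP[l1 _].
  by apply: continuous_tilted_info; rewrite gt_eqF // (lt_le_trans ltr01 l1).
have [|l] := IVT le12 cont (v := v); first by rewrite (min_idPl h12) (max_idPr h12).
by rewrite in_itv /=; exists l.
Qed.

Lemma exists_objective_tilted_eq_dual : (MI b PX W < Rt%:E)%E ->
  exists2 l, 1 <= l <= 2 & objective b PX W Rt (tilted l) = dual_fun b PX W Rt l.
Proof.
rewrite MI_tilted lte_fin ltr_pdivrMr // => h1.
have [h2|h2] := leP (tilted_info 2) (Rt * ln b).
  by exists 2; [rewrite ler1n lexx | exact: objective_tilted2_eq_dual].
have [|l l12 hl] := @exists_tilted_info_eq (Rt * ln b); first by rewrite !ltW.
by exists l => //; apply: objective_tilted_eq_dual => //; case/andP: l12.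
Qed.

End ObjectiveDual.
End Channel.

Theorem proposition1 (R : realType) (b : R) (X Y : finType)
    (PX : X -> R) (W : X -> Y -> R) (Rt : R) :
  1 < b ->
  is_dist PX ->
  (forall x, is_dist (W x)) ->
  (MI b PX W < Rt%:E)%E ->
  exists v : \bar R,
    [/\ (exists Q : X * Y -> R, is_dist Q /\ objective b PX W Rt Q = v),
        (forall Q : X * Y -> R, is_dist Q -> (v <= objective b PX W Rt Q)%E),
        (exists l : R, 1 <= l <= 2 /\ dual_fun b PX W Rt l = v) &
        (forall l : R, 1 <= l <= 2 -> (dual_fun b PX W Rt l <= v)%E)].
Proof.
move=> b1 [PX0 PX1] HW HMI.
have W0 x y : 0 <= W x y by exact: (HW x).1.
have W1 x : \sum_y W x y = 1 by exact: (HW x).2.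
have [l l12 Heq] := exists_objective_tilted_eq_dual PX0 PX1 W0 W1 b1 HMI.
exists (dual_fun b PX W Rt l); split.
- by exists (tilted PX W l); split; [exact: tilted_dist | exact: Heq].
- by move=> Q QD; exact: dual_le_objective.
- by exists l.
- by move=> l' l'12; rewrite -Heq; apply: dual_le_objective => //; exact: tilted_dist.
Qed.
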